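(* Let $\Delta:A\to A$ be a weak-2-local derivation on a unital C$^*$-algebra $A$. Then for each projection $p\in A$, each $a\in A$ and each $\lambda\in\mathbb{C}$, $\Delta(a+\lambda p)=\Delta(a-\lambda(1-p))$.
   Context: A derivation on $A$ is a linear map $D:A\to A$ with $D(ab)=D(a)b+aD(b)$. A (not necessarily linear) map $\Delta:A\to A$ is a weak-2-local derivation if for every $a,b\in A$ and every $\phi\in A^*$ there exists a derivation $D_{a,b,\phi}:A\to A$ such that $\phi\Delta(a)=\phi D_{a,b,\phi}(a)$ and $\phi\Delta(b)=\phi D_{a,b,\phi}(b)$. *)

From HB Require Import structures.
From mathcomp Require Import all_boot all_order all_algebra.
From mathcomp Require Import complex.
From mathcomp Require Import reals.
Set Implicit Arguments. Unset Strict Implicit. Unset Printing Implicit Defensive.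
Import Order.TTheory GRing.Theory Num.Theory.
Local Open Scope ring_scope.

Definition cmod (R : rcfType) (c : R[i]) : R := ComplexField.Normc.normc c.

Definition is_unital_Cstar (R : rcfType) (A : algType R[i])
    (star : A -> A) (nrm : A -> R) : Prop :=
  [/\ (forall a, star (star a) = a),
      (forall a b, star (a + b) = star a + star b),
      (forall (c : R[i]) a, star (c *: a) = conjc c *: star a)
    & (forall a b, star (a * b) = star b * star a)] /\
  [/\ (forall a, 0 <= nrm a),
      (forall a, nrm a = 0 -> a = 0),
      (forall a b, nrm (a + b) <= nrm a + nrm b),
      (forall (c : R[i]) a, nrm (c *: a) = cmod c * nrm a)
    & (forall a b, nrm (a * b) <= nrm a * nrm b)] /\
  (forall u : nat -> A,
      (forall e : R, 0 < e -> exists N : nat, forall m n : nat,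
          (N <= m)%N -> (N <= n)%N -> nrm (u m - u n) < e) ->
      exists l : A, forall e : R, 0 < e -> exists N : nat, forall n : nat,
          (N <= n)%N -> nrm (u n - l) < e) /\
  (forall a, nrm (star a * a) = nrm a ^+ 2).

Definition is_projection (R : rcfType) (A : algType R[i]) (star : A -> A)
    (p : A) : Prop := p * p = p /\ star p = p.

Definition is_derivation (R : rcfType) (A : algType R[i]) (D : A -> A) : Prop :=
  [/\ (forall a b, D (a + b) = D a + D b),
      (forall (c : R[i]) a, D (c *: a) = c *: D a)
    & (forall a b, D (a * b) = D a * b + a * D b)].

Definition in_dual (R : rcfType) (A : algType R[i]) (nrm : A -> R)
    (phi : A -> R[i]) : Prop :=
  [/\ (forall a b, phi (a + b) = phi a + phi b),
      (forall (c : R[i]) a, phi (c *: a) = c * phi a)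
    & exists M : R, forall a, cmod (phi a) <= M * nrm a].

Definition weak_2_local_derivation (R : rcfType) (A : algType R[i])
    (nrm : A -> R) (Delta : A -> A) : Prop :=
  forall (a b : A) (phi : A -> R[i]), in_dual nrm phi ->
    exists D : A -> A, [/\ is_derivation D,
      phi (Delta a) = phi (D a) & phi (Delta b) = phi (D b)].

(* Bounded functionals separate the points of A (Hahn-Banach), so it suffices to
   show phi (Delta x) = phi (Delta y) for every phi in A^*, where x = a + lambda p
   and y = a - lambda (1 - p). For a fixed phi, weak-2-locality yields a derivation
   D with phi (Delta x) = phi (D x) and phi (Delta y) = phi (D y); but
   x - y = lambda 1 and D 1 = 0 by the Leibniz rule, so D x = D y.
   Hahn-Banach is proved for the underlying real vector space by Zorn's lemma on
   graphs of partial functionals dominated by the norm, and a real functional g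
   is complexified as x |-> g x - i g (i x). *)
From HB Require Import structures.
From mathcomp Require Import all_boot all_order all_algebra.
From mathcomp Require Import complex reals boolp classical_sets.
From mathcomp Require Import ring lra.
Set Implicit Arguments. Unset Strict Implicit. Unset Printing Implicit Defensive.
Import Order.TTheory GRing.Theory Num.Theory.
Local Open Scope ring_scope.
Local Open Scope classical_set_scope.

Local Notation "t *:R x" := ((t%:C)%C *: x) (at level 40).

Section RealHahnBanach.
Variables (R : realType) (V : lmodType R[i]) (p : V -> R).
Hypothesis pD : forall x y, p (x + y) <= p x + p y.
Hypothesis pZ : forall (t : R) x, p (t *:R x) = `|t| * p x.

Lemma seminorm0 : p 0 = 0.
Proof. by have := pZ 0 0; rewrite rmorph0 scale0r normr0 mul0r. Qed.

Lemma seminorm_ge0 x : 0 <= p x.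
Proof.
have := pD x (- x); rewrite subrr seminorm0.
have -> : - x = (-1) *:R x by rewrite rmorphN1 scaleN1r.
by rewrite pZ normrN1 mul1r; lra.
Qed.

Lemma dominated_abs_le (g : V -> R) :
  (forall (t : R) x, g (t *:R x) = t * g x) -> (forall x, g x <= p x) ->
  forall x, `|g x| <= p x.
Proof.
move=> gZ g_le x; have := g_le ((-1) *:R x).
rewrite gZ pZ normrN1 mul1r mulN1r => gN_le.
by rewrite ler_norml g_le andbT lerNl.
Qed.

Variable z : V.

(* The last clause makes every nonempty member extend [t z |-> t p z], while
   keeping the empty graph (the union of the empty chain) in the family. *)
Definition dominated_graph (G : set (V * R)) : Prop :=
  [/\ forall x r s, G (x, r) -> G (x, s) -> r = s,
      forall x y r s, G (x, r) -> G (y, s) -> G (x + y, r + s),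
      forall (t : R) x r, G (x, r) -> G (t *:R x, t * r),
      forall x r, G (x, r) -> r <= p x
    & G !=set0 -> G (z, p z)].

Lemma dominated_graph_bigcup (F : set (set (V * R))) :
  F `<=` dominated_graph -> total_on F subset ->
  dominated_graph (\bigcup_(X in F) X).
Proof.
move=> FP Ftot.
have common u v : (\bigcup_(X in F) X) u -> (\bigcup_(X in F) X) v ->
    exists2 X, F X & X u /\ X v.
  move=> [X FX Xu] [Y FY Yv]; have [XY|YX] := Ftot X Y FX FY.
  - by exists Y => //; split => //; apply: XY.
  - by exists X => //; split => //; apply: YX.
split.
- move=> x r s Gr Gs; have [X FX [Xr Xs]] := common _ _ Gr Gs.
  by have [X_fun _ _ _ _] := FP X FX; apply: X_fun Xr Xs.
- move=> x y r s Gr Gs; have [X FX [Xr Xs]] := common _ _ Gr Gs.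
  by have [_ XD _ _ _] := FP X FX; exists X => //; apply: XD.
- by move=> t x r [X FX Xr]; have [_ _ XZ _ _] := FP X FX; exists X => //; apply: XZ.
- by move=> x r [X FX Xr]; have [_ _ _ X_le _] := FP X FX; apply: X_le Xr.
- move=> [u [X FX Xu]]; have [_ _ _ _ Xz] := FP X FX.
  by exists X => //; apply: Xz; exists u.
Qed.

Lemma dominated_graph_span :
  dominated_graph (range (fun t : R => (t *:R z, t * p z))).
Proof.
split.
- move=> _ r s [t1 _ [<- <-]] [t2 _ [e <-]].
  have [->|t12] := eqVneq t1 t2; first by [].
  suff -> : z = 0 by rewrite seminorm0 !mulr0.
  apply: (@scalerI _ _ ((t1 - t2)%:C)%C); first by rewrite fmorph_eq0 subr_eq0.
  by rewrite scaler0 rmorphB scalerBl e subrr.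
- move=> _ _ _ _ [t1 _ [<- <-]] [t2 _ [<- <-]]; exists (t1 + t2) => //.
  by rewrite rmorphD scalerDl mulrDl.
- move=> t _ _ [t1 _ [<- <-]]; exists (t * t1) => //.
  by rewrite rmorphM scalerA mulrA.
- move=> _ _ [t _ [<- <-]]; rewrite pZ.
  by apply: ler_wpM2r; [apply: seminorm_ge0 | apply: ler_norm].
- by move=> _; exists 1 => //; rewrite rmorph1 scale1r mul1r.
Qed.

Section Extension.
Variables (G : set (V * R)) (x0 : V).
Hypothesis G_dom : dominated_graph G.
Hypothesis x0_notin : ~ exists r, G (x0, r).

(* Any value [c] in the gap below is an admissible value at [x0]. *)
Lemma dominated_graph_gap : G (0, 0) ->
  exists c, (forall y r, G (y, r) -> r - p (y - x0) <= c) /\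
            (forall y r, G (y, r) -> c <= p (y + x0) - r).
Proof.
move=> G00; have [_ GD _ G_le _] := G_dom.
have gap y r y' r' : G (y, r) -> G (y', r') -> r - p (y - x0) <= p (y' + x0) - r'.
  move=> Gyr Gyr'; have := G_le _ _ (GD _ _ _ _ Gyr Gyr').
  have := pD (y - x0) (y' + x0); rewrite addrACA addNr addr0; lra.
pose E := [set v | exists y r, G (y, r) /\ v = r - p (y - x0)].
have E_neq0 : E !=set0 by exists (0 - p (0 - x0)), 0, 0.
have E_sup : has_sup E.
  split => //.
  by exists (p (0 + x0) - 0) => _ [y [r [Gyr ->]]]; apply: gap.
exists (sup E); split.
- by move=> y r Gyr; apply: sup_upper_bound => //; exists y, r.
- by move=> y r Gyr; apply: ge_sup => // _ [y' [r' [Gyr' ->]]]; apply: gap.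
Qed.

Definition graph_extension (c : R) : set (V * R) :=
  [set u | exists y r t, G (y, r) /\ u = (y + t *:R x0, r + t * c)].

Variable c : R.
Hypothesis c_ge : forall y r, G (y, r) -> r - p (y - x0) <= c.
Hypothesis c_le : forall y r, G (y, r) -> c <= p (y + x0) - r.

Lemma graph_extension_le y r t : G (y, r) -> r + t * c <= p (y + t *:R x0).
Proof.
move=> Gyr; have [_ _ GZ _ _] := G_dom.
have [t_gt0|t_lt0|->] := ltrgt0P t; last first.
- by rewrite rmorph0 scale0r addr0 mul0r addr0; have [_ _ _ G_le _] := G_dom; apply: G_le.
- have Nt_gt0 : 0 < - t by rewrite oppr_gt0.
  have t_neq0 : - t != 0 by rewrite gt_eqF.
  have := c_ge (GZ (- t)^-1 _ _ Gyr).
  have -> : y + t *:R x0 = (- t) *:R ((- t)^-1 *:R y - x0).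
    by rewrite scalerBr fmorphV scalerKV ?fmorph_eq0 // rmorphN scaleNr opprK.
  rewrite pZ gtr0_norm // => /(ler_wpM2l (ltW Nt_gt0)).
  by rewrite mulrBr mulrA mulfV // mul1r; lra.
- have t_neq0 : t != 0 by rewrite gt_eqF.
  have := c_le (GZ t^-1 _ _ Gyr).
  have -> : y + t *:R x0 = t *:R (t^-1 *:R y + x0).
    by rewrite scalerDr fmorphV scalerKV ?fmorph_eq0.
  rewrite pZ gtr0_norm // => /(ler_wpM2l (ltW t_gt0)).
  by rewrite mulrBr mulrA mulfV // mul1r; lra.
Qed.

Lemma graph_extension_dominated : dominated_graph (graph_extension c).
Proof.
have [G_fun GD GZ _ Gz] := G_dom.
split.
- move=> x r s [y1 [r1 [t1 [G1 []]]]] -> -> [y2 [r2 [t2 [G2 []]]]] e ->.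
  have [t12|t12] := eqVneq t1 t2.
    by subst t2; move/addIr: e => e; subst y2; rewrite (G_fun _ _ _ G1 G2).
  exfalso; apply: x0_notin.
  have t12_neq0 : ((t1 - t2)%:C)%C != 0 by rewrite fmorph_eq0 subr_eq0.
  have -> : x0 = ((t1 - t2)^-1) *:R (y2 - y1).
    rewrite fmorphV -[x0](scalerK t12_neq0); congr (_ *: _).
    have -> : y2 = y1 + t1 *:R x0 - t2 *:R x0 by rewrite e addrK.
    by rewrite rmorphB scalerBl [RHS]addrC !addrA addNr add0r.
  exists ((t1 - t2)^-1 * (r2 - r1)); apply: (GZ); apply: (GD) => //.
  by have := GZ (-1) _ _ G1; rewrite rmorphN1 scaleN1r mulN1r.
- move=> _ _ _ _ [y1 [r1 [t1 [G1 [-> ->]]]]] [y2 [r2 [t2 [G2 [-> ->]]]]].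
  exists (y1 + y2), (r1 + r2), (t1 + t2); split; first exact: GD.
  by rewrite rmorphD scalerDl mulrDl; congr (_, _); rewrite addrACA.
- move=> t _ _ [y1 [r1 [t1 [G1 [-> ->]]]]].
  exists (t *:R y1), (t * r1), (t * t1); split; first exact: GZ.
  by rewrite scalerDr scalerA -rmorphM mulrDr mulrA.
- by move=> _ _ [y [r [t [Gyr [-> ->]]]]]; apply: graph_extension_le.
- move=> [_ [y [r [t [Gyr _]]]]]; exists z, (p z), 0; split.
    by apply: Gz; exists (y, r).
  by rewrite rmorph0 scale0r addr0 mul0r addr0.
Qed.

End Extension.

Lemma dominated_graph_extend G x0 : dominated_graph G -> G (0, 0) ->
  ~ (exists r, G (x0, r)) -> exists2 B, dominated_graph B & G `<` B.
Proof.
move=> G_dom G00 x0_notin.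
have [c [c_ge c_le]] := dominated_graph_gap x0 G_dom G00.
exists (graph_extension G x0 c); first exact: graph_extension_dominated.
split.
  move=> [x r] Gxr; exists x, r, 0; split => //.
  by rewrite rmorph0 scale0r addr0 mul0r addr0.
move=> ext_sub; apply: x0_notin; exists c; apply: ext_sub.
by exists 0, 0, 1; rewrite rmorph1 scale1r add0r mul1r add0r.
Qed.

Theorem hahn_banach_real : exists g : V -> R,
  [/\ forall x y, g (x + y) = g x + g y,
      forall (t : R) x, g (t *:R x) = t * g x,
      forall x, g x <= p x
    & g z = p z].
Proof.
have [G [G_dom G_max]] := Zorn_bigcup dominated_graph_bigcup.
have [G_fun GD GZ G_le Gz] := G_dom.
have Gzz : G (z, p z).
  apply: Gz; apply/set0P/eqP => G0; apply: (G_max _ _ dominated_graph_span).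
  rewrite G0; split; first exact: sub0set.
  by move/(_ (z, p z)); apply; exists 1 => //; rewrite rmorph1 scale1r mul1r.
have G00 : G (0, 0) by have := GZ 0 _ _ Gzz; rewrite rmorph0 scale0r mul0r.
have G_total x : exists r, G (x, r).
  apply: contrapT => x_notin.
  by have [B B_dom /G_max] := dominated_graph_extend G_dom G00 x_notin.
pose g x := projT1 (cid (G_total x)).
have Gg x : G (x, g x) := projT2 (cid (G_total x)).
exists g; split.
- by move=> x y; apply: G_fun (Gg _) (GD _ _ _ _ (Gg x) (Gg y)).
- by move=> t x; apply: G_fun (Gg _) (GZ t _ _ (Gg x)).
- by move=> x; apply: G_le (Gg x).
- exact: G_fun (Gg z) Gzz.
Qed.

End RealHahnBanach.

Lemma cmod_real (R : rcfType) (t : R) : cmod ((t%:C)%C) = `|t|.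
Proof. by rewrite /cmod /= expr0n /= addr0 sqrtr_sqr. Qed.

Lemma cmod_i (R : rcfType) : cmod ('i%C : R[i]) = 1.
Proof. by rewrite /cmod /= expr0n /= expr1n add0r sqrtr1. Qed.

Section DualSeparation.
Variables (R : realType) (A : algType R[i]) (nrm : A -> R).
Hypothesis nrmD : forall a b, nrm (a + b) <= nrm a + nrm b.
Hypothesis nrmZ : forall (c : R[i]) a, nrm (c *: a) = cmod c * nrm a.

Lemma nrmZ_real (t : R) a : nrm (t *:R a) = `|t| * nrm a.
Proof. by rewrite nrmZ cmod_real. Qed.

Lemma in_dualB phi : in_dual nrm phi -> forall a b, phi (a - b) = phi a - phi b.
Proof. by move=> [phiD phiZ _] a b; rewrite phiD -scaleN1r phiZ mulN1r. Qed.

Lemma complexify_in_dual (g : A -> R) :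
  (forall a b, g (a + b) = g a + g b) -> (forall (t : R) a, g (t *:R a) = t * g a) ->
  (forall a, `|g a| <= nrm a) ->
  in_dual nrm (fun a => ((g a)%:C - 'i * (g ('i *: a))%:C)%C).
Proof.
move=> gD gZ g_le.
have gC (u v : R) a : g ((u +i* v)%C *: a) = u * g a + v * g ('i%C *: a).
  have -> : (u +i* v)%C = u%:C%C + v%:C%C * 'i%C.
    by apply/eqP; rewrite eq_complex /=; apply/andP; split; apply/eqP; ring.
  by rewrite scalerDl -scalerA gD !gZ.
split.
- by move=> a b; rewrite scalerDr !gD !rmorphD mulrDr opprD addrACA.
- move=> [u v] a; rewrite scalerA.
  have -> : ('i%C * (u +i* v)%C : R[i]) = ((- v) +i* u)%C.
    by apply/eqP; rewrite eq_complex /=; apply/andP; split; apply/eqP; ring.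
  rewrite (gC (- v) u) (gC u v).
  by apply/eqP; rewrite eq_complex /=; apply/andP; split; apply/eqP; ring.
- exists 2 => a; rewrite /cmod /=.
  have := g_le a; have := g_le ('i%C *: a); rewrite nrmZ cmod_i mul1r !ler_norml.
  have nrm_a := seminorm_ge0 nrmD nrmZ_real a.
  have -> : 2 * nrm a = Num.sqrt ((2 * nrm a) ^+ 2).
    by rewrite sqrtr_sqr ger0_norm //; lra.
  rewrite ler_sqrt ?sqr_ge0 // => /andP[? ?] /andP[? ?]; nra.
Qed.

Lemma in_dual_separates a : 0 < nrm a -> exists2 phi, in_dual nrm phi & phi a != 0.
Proof.
move=> nrm_a_gt0.
have [g [gD gZ g_le ga]] := hahn_banach_real nrmD nrmZ_real a.
exists (fun b => ((g b)%:C - 'i * (g ('i *: b))%:C)%C).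
  exact: complexify_in_dual gD gZ (dominated_abs_le nrmZ_real gZ g_le).
by apply/negP => /eqP /(f_equal (@complex.Re R)) /=; rewrite ga; lra.
Qed.

Lemma in_dual_inj (nrm_eq0 : forall a, nrm a = 0 -> a = 0) a b :
  (forall phi, in_dual nrm phi -> phi a = phi b) -> a = b.
Proof.
move=> phi_eq; apply/eqP; rewrite -subr_eq0; apply: contraT => ab_neq0.
have nrm_gt0 : 0 < nrm (a - b).
  rewrite lt_def (seminorm_ge0 nrmD nrmZ_real) andbT.
  by apply: contra ab_neq0 => /eqP /nrm_eq0 ->.
have [phi phi_dual] := in_dual_separates nrm_gt0.
by rewrite (in_dualB phi_dual) (phi_eq _ phi_dual) subrr eqxx.
Qed.

End DualSeparation.

Lemma derivation1 (R : rcfType) (A : algType R[i]) (D : A -> A) :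
  is_derivation D -> D 1 = 0.
Proof.
move=> [DD _ DM]; have := DM 1 1; rewrite !mul1r !mulr1 => D1.
by apply: (@addrI _ (D 1)); rewrite addr0 -D1.
Qed.

Theorem lemma2p3 (R : realType) (A : algType R[i]) (star : A -> A)
    (nrm : A -> R) (HA : is_unital_Cstar star nrm) (Delta : A -> A)
    (HDelta : weak_2_local_derivation nrm Delta)
    (p : A) (Hp : is_projection star p) (a : A) (lambda : R[i]) :
  Delta (a + lambda *: p) = Delta (a - lambda *: (1 - p)).
Proof.
have [_ [[_ nrm_eq0 nrmD nrmZ _] _]] := HA.
apply: (in_dual_inj nrmD nrmZ nrm_eq0) => phi phi_dual.
have [D [D_der -> ->]] := HDelta (a + lambda *: p) (a - lambda *: (1 - p)) phi phi_dual.
have [DD DZ _] := D_der.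
have -> : a + lambda *: p = a - lambda *: (1 - p) + lambda *: 1.
  by rewrite scalerBr opprB -addrA subrK.
by rewrite DD DZ (derivation1 D_der) scaler0 addr0.
Qed.
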